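(* Let $A\in\mathbb{C}^{n\times m}$, $\alpha_1\ge1/\sqrt n$, $\alpha_2\ge1/\sqrt m$, $U=\{u\in\mathbb{C}^n:\|u\|\le\alpha_1,\operatorname{Re}(u)\ge0,\sum_iu_i=1\}$, $V=\{v\in\mathbb{C}^m:\|v\|\le\alpha_2,\operatorname{Re}(v)\ge0,\sum_iv_i=1\}$. Let $\mu_B\in\mathbb{C}^{1\times n}$, $b\in\mathbb{R}$, $\mu_D\in\mathbb{C}^{1\times m}$, $d\in\mathbb{R}$, and let $(\Gamma_B,J_B)$, $(\Gamma_D,J_D)$ be the covariance and pseudo-covariance matrices of complex random row vectors $B\in\mathbb{C}^{1\times n}$, $D\in\mathbb{C}^{1\times m}$. For $p=(p_1,p_2)$ set $$S_1(p_1)=\Big\{u\in U:\operatorname{Re}(\mu_Bu)+k_{p_1}\sqrt{\tfrac12\big(u^H\Gamma_Bu+\operatorname{Re}(u^TJ_Bu)\big)}\le b\Big\},$$ $$S_2(p_2)=\Big\{v\in V:\operatorname{Re}(\mu_Dv)-k_{p_2}\sqrt{\tfrac12\big(v^H\Gamma_Dv+\operatorname{Re}(v^TJ_Dv)\big)}\ge d\Big\},$$ where for each $j$, $k_{p_j}$ and the range of $p_j$ are given by one of the following cases: (i) CES distribution: $p_j\in[0.5,1)$, $k_{p_j}=\Phi^{-1}(p_j)$; (ii) known first two moments: $p_j\in(0,1)$, $k_{p_j}=\sqrt{p_j/(1-p_j)}$; (iii) unknown second-order moment: $p_j\in(0,1)$, $k_{p_j}=\sqrt{p_j/(1-p_j)}$;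 (iv) unknown moments (proper case): $p_j\in(0,1)$, $k_{p_j}=\sqrt{p_j/(1-p_j)}\sqrt{\zeta_2}+\sqrt{\zeta_1}$ with constants $\zeta_1,\zeta_2\ge0$. Assume there exist $u\in S_1(p_1)$ and $v\in S_2(p_2)$ for which all defining inequality constraints hold strictly. Then the game $G(p)=\max_{u\in S_1(p_1)}\min_{v\in S_2(p_2)}\operatorname{Re}(u^HAv)$ admits a saddle-point equilibrium, i.e. there exists $(u^\star,v^\star)\in S_1(p_1)\times S_2(p_2)$ with $$\operatorname{Re}(u^HAv^\star)\le\operatorname{Re}(u^{\star H}Av^\star)\le\operatorname{Re}(u^{\star H}Av)\qquad\forall(u,v)\in S_1(p_1)\times S_2(p_2).$$
   Context: $\|\cdot\|$ is the Euclidean norm, $^H$ conjugate transpose, $\operatorname{Re}(u)\ge0$ componentwise. The quantities $\tfrac12(u^H\Gamma_Bu+\operatorname{Re}(u^TJ_Bu))$ and $\tfrac12(v^H\Gamma_Dv+\operatorname{Re}(v^TJ_Dv))$ are, by the paper's convention, the variances of $\operatorname{Re}(Bu)$ and $\operatorname{Re}(Dv)$, hence nonnegative (positive semidefinite quadratic forms in $(\operatorname{Re}u,\operatorname{Im}u)$, resp. $(\operatorname{Re}v,\operatorname{Im}v)$). $\Phi^{-1}$ is the inverse cumulative distribution function (quantile function) of the standard complex elliptically symmetric distribution used in the chance-constraint reformulation. A complex elliptically symmetric distribution with mean $\mu$, covariance $\Gamma$, pseudo-covariance $J$ has characteristic function $\exp(i\operatorname{Re}(z^H\mu))\,\psi(z^H\Gamma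 z+\operatorname{Re}(z^HJ\bar z))$ for some generator $\psi$. *)

From mathcomp Require Import all_boot all_algebra.
From mathcomp Require Import complex.
From mathcomp Require Import all_classical all_reals all_analysis.
Set Implicit Arguments. Unset Strict Implicit. Unset Printing Implicit Defensive.
Import GRing.Theory Num.Theory.
Local Open Scope ring_scope.
Local Open Scope classical_set_scope.

Section ChanceGame.
Variable R : realType.

Definition conjT (r c : nat) (M : 'M[R[i]]_(r, c)) : 'M[R[i]]_(c, r) :=
  (map_mx conjc M)^T.

Definition cnorm (n : nat) (u : 'cV[R[i]]_n) : R :=
  Num.sqrt (\sum_(i < n) ((complex.Re (u i 0)) ^+ 2 + (complex.Im (u i 0)) ^+ 2)).

Definition Uset (n : nat) (alpha : R) : set 'cV[R[i]]_n :=
  [set u | cnorm u <= alpha /\ (forall i, 0 <= complex.Re (u i 0)) /\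
           \sum_(i < n) u i 0 = 1].

(* (1/2)(u^H G u + Re(u^T J u)), the variance of Re(B u) *)
Definition varform (n : nat) (G J : 'M[R[i]]_n) (u : 'cV[R[i]]_n) : R :=
  (complex.Re ((conjT u *m G *m u) 0 0) + complex.Re ((u^T *m J *m u) 0 0)) / 2.

(* (G, J) is a covariance / pseudo-covariance pair of a complex random
   vector: G Hermitian, J symmetric, and every variance form nonnegative
   (this characterizes exactly the realizable pairs). *)
Definition cov_pair (n : nat) (G J : 'M[R[i]]_n) : Prop :=
  conjT G = G /\ J^T = J /\ (forall u, 0 <= varform G J u).

Definition rot (t : R) (z : R * R) : R * R :=
  (cos t * z.1 - sin t * z.2, sin t * z.1 + cos t * z.2).

(* a standard (zero mean, identity scatter, zero pseudo-scatter) scalar CES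
   distribution: a probability on C = R x R whose characteristic function is
   radial, i.e. which is rotation invariant *)
Definition std_CES (P : probability (R * R)%type R) : Prop :=
  forall (t : R) (A : set (R * R)), measurable A -> P (rot t @^-1` A) = P A.

(* cumulative distribution function Phi of the standard CES variable (its
   real part) and its quantile function Phi^{-1} *)
Definition ces_cdf (P : probability (R * R)%type R) (x : R) : R :=
  fine (P [set z : R * R | z.1 <= x]).

Definition ces_quantile (P : probability (R * R)%type R) (p : R) : R :=
  inf [set x : R | p <= ces_cdf P x].

Inductive k_case (p k : R) : Prop :=
  | k_CES (P : probability (R * R)%type R) :
      std_CES P -> 2^-1 <= p < 1 -> k = ces_quantile P p -> k_case p k
  | k_known_moments :
      0 < p < 1 -> k = Num.sqrt (p / (1 - p)) -> k_case p k
  | k_unknown_second_moment :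
      0 < p < 1 -> k = Num.sqrt (p / (1 - p)) -> k_case p k
  | k_unknown_moments (zeta1 zeta2 : R) :
      0 <= zeta1 -> 0 <= zeta2 -> 0 < p < 1 ->
      k = Num.sqrt (p / (1 - p)) * Num.sqrt zeta2 + Num.sqrt zeta1 ->
      k_case p k.

Definition S1 (n : nat) (alpha1 : R) (muB : 'rV[R[i]]_n) (GB JB : 'M[R[i]]_n)
  (b k1 : R) : set 'cV[R[i]]_n :=
  [set u | Uset alpha1 u /\
           complex.Re ((muB *m u) 0 0) + k1 * Num.sqrt (varform GB JB u) <= b].

Definition S2 (m : nat) (alpha2 : R) (muD : 'rV[R[i]]_m) (GD JD : 'M[R[i]]_m)
  (d k2 : R) : set 'cV[R[i]]_m :=
  [set v | Uset alpha2 v /\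
           complex.Re ((muD *m v) 0 0) - k2 * Num.sqrt (varform GD JD v) >= d].

Definition S1_strict (n : nat) (alpha1 : R) (muB : 'rV[R[i]]_n)
  (GB JB : 'M[R[i]]_n) (b k1 : R) (u : 'cV[R[i]]_n) : Prop :=
  [/\ cnorm u < alpha1, (forall i, 0 < complex.Re (u i 0)), \sum_(i < n) u i 0 = 1 &
      complex.Re ((muB *m u) 0 0) + k1 * Num.sqrt (varform GB JB u) < b].

Definition S2_strict (m : nat) (alpha2 : R) (muD : 'rV[R[i]]_m)
  (GD JD : 'M[R[i]]_m) (d k2 : R) (v : 'cV[R[i]]_m) : Prop :=
  [/\ cnorm v < alpha2, (forall i, 0 < complex.Re (v i 0)), \sum_(i < m) v i 0 = 1 &
      complex.Re ((muD *m v) 0 0) - k2 * Num.sqrt (varform GD JD v) > d].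

Definition payoff (n m : nat) (A : 'M[R[i]]_(n, m)) (u : 'cV[R[i]]_n)
  (v : 'cV[R[i]]_m) : R :=
  complex.Re ((conjT u *m A *m v) 0 0).

End ChanceGame.

From Pilot Require Import Defs.
From mathcomp Require Import all_boot all_order all_algebra.
From mathcomp Require Import complex finmap.
From mathcomp Require Import all_classical all_reals all_analysis.
From mathcomp Require Import ring lra.
Set Implicit Arguments. Unset Strict Implicit. Unset Printing Implicit Defensive.
Import Order.TTheory GRing.Theory Num.Theory numFieldNormedType.Exports.
Local Open Scope ring_scope.
Local Open Scope classical_set_scope.

(* In the real coordinates (Re u, Im u) the payoff Re (u^H A v) is bilinear and
   the feasible sets S1(p1), S2(p2) are compact.  They are convex because
   k_{p_j} >= 0 and the square root of a positive semidefinite quadratic form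
   is convex (Cauchy-Schwarz).  In the CES case k_{p_j} = Phi^-1(p_j) >= 0 for
   p_j >= 1/2: rotation by pi exchanges the tails {Re z <= -c} and
   {Re z >= c}, and countably many rotated copies of the strip {|Re z| < c}
   cover the plane, so the strip has positive mass and each tail has mass
   < 1/2.
   A saddle point then exists by the minimax theorem for functions affine in
   each variable, proved as in Komiya's elementary proof of Sion's theorem: a
   separation argument in the plane handles two points of the minimizer's set,
   induction handles finite subsets and compactness handles the whole set. *)

Definition affine_fun (R : numDomainType) (M : lmodType R) (g : M -> R) :=
  forall t x y, g (t *: x + (1 - t) *: y) = t * g x + (1 - t) * g y.

Lemma convex_setP (R : numDomainType) (M : lmodType R) (X : set M) :
  convex_set X <->
  (forall t x y, 0 <= t <= 1 -> X x -> X y -> X (t *: x + (1 - t) *: y)).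
Proof.
split=> [cX t x y /andP[t0 t1] Xx Xy | cX x y t].
  by have := cX x y (Itv01 t0 t1); rewrite !inE; apply.
by rewrite !inE => Xx Xy; apply: cX => //; rewrite ge0 le1.
Qed.

Lemma lt_convex_comb (R : realDomainType) (t a b c : R) :
  0 <= t <= 1 -> c < a -> c < b -> c < t * a + (1 - t) * b.
Proof.
case/andP=> t0 t1 ca cb; have [->|t_neq1] := eqVneq t 1.
  by rewrite subrr mul0r addr0 mul1r.
have : t < 1 by rewrite lt_neqAle t_neq1.
nra.
Qed.

Section AffinePairSeparation.
Variables (R : realType) (M : lmodType R) (X : set M) (g h : M -> R).
Hypotheses (cX : convex_set X) (g_aff : affine_fun g) (h_aff : affine_fun h).
Hypothesis no_quadrant : forall x, X x -> g x <= 0 \/ h x <= 0.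

Lemma affine_pair_cross_le x x' : X x -> X x' -> 0 < g x -> 0 < h x' ->
  g x * h x' <= g x' * h x.
Proof.
move=> Xx Xx' gx hx'.
have hx : h x <= 0 by case: (no_quadrant Xx) => //; lra.
have gx' : g x' <= 0 by case: (no_quadrant Xx') => //; lra.
rewrite leNgt; apply/negP => cross.
pose den := (g x - h x) + (h x' - g x').
have den0 : 0 < den by rewrite /den; lra.
pose m := (h x' - g x') / den.
have m01 : 0 <= m <= 1.
  by apply/andP; split; [apply: divr_ge0 | rewrite ler_pdivrMr // mul1r /den]; lra.
(* z is the point of the segment [x, x'] where g and h agree. *)
pose z := m *: x + (1 - m) *: x'.
have gz : g z = (g x * h x' - g x' * h x) / den.
  by rewrite /z g_aff /m /den; field; rewrite -/den gt_eqF.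
have hz : h z = (g x * h x' - g x' * h x) / den.
  by rewrite /z h_aff /m /den; field; rewrite -/den gt_eqF.
have pos : 0 < (g x * h x' - g x' * h x) / den by apply: divr_gt0; lra.
have Xz : X z by apply: (convex_setP X).1.
by case: (no_quadrant Xz); rewrite ?gz ?hz; lra.
Qed.

(* A point with 0 < h x forces t >= ratio x, a point with 0 < g x forces
   t <= ratio x; by the cross inequality the supremum of the lower bounds
   meets all the upper ones. *)
Lemma affine_pair_separation :
  exists2 t, 0 <= t <= 1 & forall x, X x -> t * g x + (1 - t) * h x <= 0.
Proof.
have [[x0 [Xx0 hx0]]|h_le0] := pselect (exists x, X x /\ 0 < h x); last first.
  exists 0; first by rewrite lexx ler01.
  move=> x Xx; rewrite mul0r add0r subr0 mul1r leNgt; apply/negP => hx.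
  by apply: h_le0; exists x.
have gh_pos x : X x -> 0 < h x -> 0 < h x - g x.
  by move=> Xx hx; case: (no_quadrant Xx); lra.
have hg_neg x : X x -> 0 < g x -> h x - g x < 0.
  by move=> Xx gx; case: (no_quadrant Xx); lra.
pose ratio x := h x / (h x - g x).
have ratioE x : h x - g x != 0 -> ratio x * (h x - g x) = h x.
  by move=> hg; rewrite /ratio divfK.
pose L := ratio @` [set x | X x /\ 0 < h x].
have L_ub1 : ubound L 1.
  move=> _ [x [Xx hx] <-]; rewrite /ratio ler_pdivrMr ?gh_pos // mul1r.
  by case: (no_quadrant Xx); lra.
have L_ub x : X x -> 0 < g x -> ubound L (ratio x).
  move=> Xx gx _ [x' [Xx' hx'] <-].
  rewrite /ratio ler_ndivlMr ?hg_neg // mulrAC ler_pdivlMr ?gh_pos //.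
  have := affine_pair_cross_le Xx Xx' gx hx'; lra.
have L0 : L !=set0 by exists (ratio x0), x0.
have hasL : has_sup L by split; [exact: L0 | exists 1].
have t0 : 0 <= sup L.
  apply: le_trans _ (sup_upper_bound hasL (_ : L (ratio x0))); last by exists x0.
  by apply: divr_ge0; [apply: ltW | apply/ltW/gh_pos].
have t1 : sup L <= 1 := ge_sup L0 L_ub1.
exists (sup L); first by rewrite t0 t1.
move=> x Xx; have [hx|hx] := ltP 0 (h x).
  have Lx : L (ratio x) by exists x.
  have := ler_wpM2r (ltW (gh_pos _ Xx hx)) (sup_upper_bound hasL Lx).
  by rewrite ratioE ?gt_eqF ?gh_pos //; lra.
have [gx|gx] := ltP 0 (g x).
  have := ler_wnM2r (ltW (hg_neg _ Xx gx)) (ge_sup L0 (L_ub _ Xx gx)).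
  by rewrite ratioE ?lt_eqF ?hg_neg //; lra.
by nra.
Qed.
End AffinePairSeparation.

Section OneSidedMinimax.
Variables (R : realType) (U V : normedModType R) (f : U -> V -> R).
Hypotheses (f_affl : forall y, affine_fun (f^~ y)) (f_affr : forall x, affine_fun (f x)).

Lemma exists_gt_at_endpoints (X : set U) al y1 y2 : convex_set X ->
  (forall t, 0 <= t <= 1 -> exists2 x, X x & al < f x (t *: y1 + (1 - t) *: y2)) ->
  exists2 x, X x & al < f x y1 /\ al < f x y2.
Proof.
move=> cX cover; apply: contrapT => none.
have [| | |t t01 sep] := @affine_pair_separation R U X (fun x => f x y1 - al)
    (fun x => f x y2 - al) cX.
- by move=> t x x'; rewrite f_affl; ring.
- by move=> t x x'; rewrite f_affl; ring.
- move=> x Xx; rewrite !subr_le0; case: (leP (f x y1) al) => [|lt1]; first by left.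
  by right; rewrite leNgt; apply/negP => lt2; apply: none; exists x.
have [x Xx] := cover t t01; rewrite f_affr; have := sep x Xx; lra.
Qed.

Lemma exists_gt_finite (X : set U) (Y : set V) al (s : seq V) :
  convex_set X -> convex_set Y -> Y !=set0 ->
  (forall y, Y y -> exists2 x, X x & al < f x y) ->
  (forall y, y \in s -> Y y) -> exists2 x, X x & forall y, y \in s -> al < f x y.
Proof.
move=> + cY [y0 Yy0]; elim: s X => [|y s IH] X cX hX sY.
  by have [x Xx _] := hX y0 Yy0; exists x.
have Yy : Y y by apply: sY; rewrite mem_head.
pose Xy := X `&` [set x | al < f x y].
have cXy : convex_set Xy.
  apply/(@convex_setP _ U) => t x x' t01 [Xx hx] [Xx' hx']; split.
    exact ((convex_setP X).1 cX _ _ _ t01 Xx Xx').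
  by rewrite /= f_affl; apply: lt_convex_comb.
have hXy y' : Y y' -> exists2 x, Xy x & al < f x y'.
  move=> Yy'; have [t t01|x Xx [h1 h2]] := @exists_gt_at_endpoints X al y' y cX.
    by apply: hX; exact ((convex_setP Y).1 cY _ _ _ t01 Yy' Yy).
  by exists x.
have sYs y' : y' \in s -> Y y' by move=> y's; apply: sY; rewrite inE y's orbT.
have [x [Xx hx] hs] := IH Xy cXy hXy sYs.
by exists x => // y'; rewrite inE => /predU1P[->|/hs].
Qed.

Lemma exists_ge_of_compact (X : set U) (Y : set V) al :
  compact X -> convex_set X -> convex_set Y -> Y !=set0 ->
  (forall y r, closed [set x | r <= f x y]) ->
  (forall y, Y y -> exists2 x, X x & al < f x y) ->
  exists2 x, X x & forall y, Y y -> al <= f x y.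
Proof.
move=> + cX cY Y0 clf hX; rewrite compact_In0.
move=> /(_ V Y (fun y => X `&` [set x | al <= f x y])) [||x hx].
- by exists (fun y => [set x | al <= f x y]).
- move=> F FY; have [|x Xx hF] := @exists_gt_finite X Y al (enum_fset F) cX cY Y0 hX.
    by move=> y yF; have := FY y yF; rewrite inE.
  by exists x => y yF; split => //; apply/ltW/hF.
- have [y0 Yy0] := Y0; exists x; first by case: (hx y0 Yy0).
  by move=> y Yy; case: (hx y Yy).
Qed.
End OneSidedMinimax.

Section CompactBounds.
Variables (R : realType) (T : ptopologicalType) (K : set T).
Hypothesis cK : compact K.

Lemma compact_ubound (g : T -> R) : (forall r, closed [set z | r <= g z]) ->
  exists M, forall z, K z -> g z <= M.
Proof.
move=> clg; apply: contrapT => unbounded.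
have := cK; rewrite compact_In0.
move=> /(_ R setT (fun r => K `&` [set z | r <= g z])) [|F _|z hz].
- by exists (fun r => [set z | r <= g z]).
- have [z [Kz hz]] : exists z, K z /\ \big[Order.max/0]_(r <- enum_fset F) r <= g z.
    apply: contrapT => none; apply: unbounded.
    exists (\big[Order.max/0]_(r <- enum_fset F) r) => z Kz.
    by rewrite leNgt; apply/negP => /ltW lt; apply: none; exists z.
  exists z => r rF; split => //; apply: le_trans hz.
  exact: le_bigmax_seq.
- by have [_ /=] := hz (g z + 1) I; rewrite gerDl ler10.
Qed.

Lemma compact_le0_of_approx (I : choiceType) (D : set I) (g : I -> T -> R) :
  (forall i r, closed [set z | g i z <= r]) ->
  (forall e, 0 < e -> exists2 z, K z & forall i, D i -> g i z <= e) ->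
  exists2 z, K z & forall i, D i -> g i z <= 0.
Proof.
move=> clg approx.
have [[i0 Di0]|D0] := pselect (D !=set0); last first.
  have [z Kz _] := approx 1 ltr01.
  by exists z => // i Di; exfalso; apply: D0; exists i.
have := cK; rewrite compact_In0 => /(_ (I * R)%type [set p | D p.1 /\ 0 < p.2]
  (fun p => K `&` [set z | g p.1 z <= p.2])) [|F FD|z hz].
- by exists (fun p => [set z | g p.1 z <= p.2]).
- pose e := \big[Order.min/1]_(p <- enum_fset F | p \in F) p.2.
  have e0 : 0 < e by apply: lt_bigmin => // p /FD; rewrite inE => -[].
  have [z Kz hz] := approx e e0.
  exists z => p pF; have := FD p pF; rewrite inE => -[Dp _]; split => //.
  by apply: le_trans (hz _ Dp) _; exact: ge_bigmin_seq.
- exists z; first by have [] := hz (i0, 1) (conj Di0 ltr01).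
  move=> i Di; apply/ler_addgt0Pr => e e0; rewrite add0r.
  by have [] := hz (i, e) (conj Di e0).
Qed.
End CompactBounds.

Section Minimax.
Variables (R : realType) (U V : normedModType R) (f : U -> V -> R).
Variables (X : set U) (Y : set V).
Hypotheses (f_affl : forall y, affine_fun (f^~ y)) (f_affr : forall x, affine_fun (f x)).
Hypotheses (cptX : compact X) (cptY : compact Y).
Hypotheses (cX : convex_set X) (cY : convex_set Y) (X0 : X !=set0) (Y0 : Y !=set0).
Hypotheses (clx : forall y r, closed [set x | r <= f x y])
           (cly : forall x r, closed [set y | f x y <= r]).

Let clNf x r : closed [set y | r <= - f x y].
Proof.
rewrite (_ : [set y | _] = [set y | f x y <= - r]); first exact: cly.
by apply/seteqP; split => y /=; lra.
Qed.

Definition guaranteed_values := [set a | exists2 x, X x & forall y, Y y -> a <= f x y].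

Lemma has_sup_guaranteed_values : has_sup guaranteed_values.
Proof.
have [[x0 Xx0] [y0 Yy0]] := (X0, Y0).
have [M fM] := compact_ubound cptX (@clx y0).
have [M' fM'] := compact_ubound cptY (@clNf x0).
split; first by exists (- M'), x0 => // y Yy; have := fM' y Yy; lra.
by exists M => a [x Xx hx]; apply: le_trans (hx y0 Yy0) (fM x Xx).
Qed.

Lemma maximin_attained :
  exists2 x, X x & forall y, Y y -> sup guaranteed_values <= f x y.
Proof.
set c := sup _.
have [y r|e e0|x Xx hx] := compact_le0_of_approx cptX (D := Y) (g := fun y x => c - f x y).
- rewrite (_ : [set x | _] = [set x | c - r <= f x y]); first exact: clx.
  by apply/seteqP; split => x /=; lra.
- have [a [x Xx hx] ca] := sup_adherent e0 has_sup_guaranteed_values.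
  by exists x => // y Yy /=; have := hx y Yy; rewrite -/c in ca; lra.
- by exists x => // y Yy; have := hx y Yy; rewrite /=; lra.
Qed.

Lemma minimax_attained :
  exists2 y, Y y & forall x, X x -> f x y <= sup guaranteed_values.
Proof.
set c := sup _.
have [x r|e e0|y Yy hy] := compact_le0_of_approx cptY (D := X) (g := fun x y => f x y - c).
- rewrite (_ : [set y | _] = [set y | f x y <= r + c]); first exact: cly.
  by apply/seteqP; split => y /=; lra.
- have [| | | | y Yy hy] := @exists_ge_of_compact R V U (fun y x => - f x y)
      _ _ Y X (- (c + e)) cptY cY cX X0.
  + by move=> x t y y'; rewrite /= f_affr; ring.
  + by move=> y t x x'; rewrite /= f_affl; ring.
  + by move=> x r; exact: clNf.
  + move=> x Xx; apply: contrapT => none.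
    suff : c + e <= c by lra.
    apply: sup_upper_bound; first exact: has_sup_guaranteed_values.
    exists x => // y Yy; rewrite leNgt; apply/negP => lt.
    by apply: none; exists y => //; lra.
  by exists y => // x Xx; have := hy x Xx; lra.
- by exists y => // x Xx; have := hy x Xx; lra.
Qed.

Theorem minimax_saddle_point :
  exists x y, [/\ X x, Y y & forall x' y', X x' -> Y y' ->
    f x' y <= f x y <= f x y'].
Proof.
have [xs Xxs xs_ge] := maximin_attained; have [ys Yys ys_le] := minimax_attained.
exists xs, ys; split => // x y Xx Yy.
have := ys_le x Xx; have := xs_ge y Yy; have := ys_le xs Xxs; have := xs_ge ys Yys.
by move=> *; apply/andP; split; lra.
Qed.
End Minimax.

Section RealLinear.
Variables (R : realType) (k : nat).

Definition real_linear (g : 'rV[R]_k -> R) :=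
  forall a b x y, g (a *: x + b *: y) = a * g x + b * g y.

Definition real_bilinear (B : 'rV[R]_k -> 'rV[R]_k -> R) :=
  (forall y, real_linear (B^~ y)) /\ (forall x, real_linear (B x)).

Lemma real_linear_affine g : real_linear g -> affine_fun g.
Proof. by move=> g_lin t x y; rewrite g_lin. Qed.

Lemma real_linear_coordE g x : real_linear g ->
  g x = \sum_(j < k) x 0 j * g (delta_mx 0 j).
Proof.
move=> g_lin; have g0 : g 0 = 0.
  by have := g_lin 0 0 0 0; rewrite !scale0r addr0 !mul0r addr0.
rewrite {1}(row_sum_delta x); elim/big_rec2: _ => // j y1 y2 _ <-.
by have := g_lin (x 0 j) 1 (delta_mx 0 j) y2; rewrite scale1r mul1r => ->.
Qed.

Lemma real_linear_continuous g : real_linear g -> continuous g.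
Proof.
move=> g_lin; rewrite (_ : g = fun x => \sum_(j < k) x 0 j * g (delta_mx 0 j)).
  apply: continuous_big; first exact: add_continuous.
  move=> j _ x; apply: continuousM; [exact: coord_continuous | exact: cst_continuous].
by apply/funext => x; apply: real_linear_coordE.
Qed.

Section QuadraticForm.
Variables (B : 'rV[R]_k -> 'rV[R]_k -> R) (B_bil : real_bilinear B).

Lemma quadratic_continuous : continuous (fun x => B x x).
Proof.
have [Bl Br] := B_bil.
rewrite (_ : (fun x => B x x) = fun x => \sum_(j < k) x 0 j * B (delta_mx 0 j) x).
  apply: continuous_big; first exact: add_continuous.
  move=> j _ x; apply: continuousM; first exact: coord_continuous.
  exact: (real_linear_continuous (Br _)).
by apply/funext => x; exact: (real_linear_coordE x (Bl x)).
Qed.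

Lemma sqrt_quadratic_continuous : continuous (fun x => Num.sqrt (B x x)).
Proof.
by move=> x; apply: continuous_comp; [exact: quadratic_continuous | exact: sqrt_continuous].
Qed.

Lemma quadratic_comb a b x y :
  B (a *: x + b *: y) (a *: x + b *: y) =
  a ^+ 2 * B x x + a * b * (B x y + B y x) + b ^+ 2 * B y y.
Proof. by have [Bl Br] := B_bil; rewrite Bl !Br; ring. Qed.

Hypothesis B_psd : forall z, 0 <= B z z.

Lemma psd_cauchy_schwarz x y :
  B x y + B y x <= 2 * Num.sqrt (B x x) * Num.sqrt (B y y).
Proof.
set S := B x y + B y x; set p := Num.sqrt (B x x); set q := Num.sqrt (B y y).
have pp : p ^+ 2 = B x x by rewrite sqr_sqrtr.
have qq : q ^+ 2 = B y y by rewrite sqr_sqrtr.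
have comb_ge0 a b : 0 <= a ^+ 2 * p ^+ 2 + a * b * S + b ^+ 2 * q ^+ 2.
  by rewrite pp qq -quadratic_comb.
have degenerate c : (forall a, 0 <= a * S + c) -> S <= 0.
  move=> ge0; rewrite leNgt; apply/negP => S_gt0.
  by have := ge0 (- (c + 1) / S); rewrite divfK ?gt_eqF //; lra.
have [p0|p_neq0] := eqVneq p 0.
  rewrite p0 mulr0 mul0r; apply: (degenerate (q ^+ 2)) => a.
  by have := comb_ge0 a 1; rewrite p0; lra.
have [q0|q_neq0] := eqVneq q 0.
  rewrite q0 !mulr0; apply: (degenerate (p ^+ 2)) => a.
  by have := comb_ge0 1 a; rewrite q0; lra.
have pq_gt0 : 0 < p * q by rewrite mulr_gt0 // lt0r ?sqrtr_ge0 ?andbT.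
have := comb_ge0 q (- p); nra.
Qed.

Lemma sqrt_psd_convex t x y : 0 <= t <= 1 ->
  Num.sqrt (B (t *: x + (1 - t) *: y) (t *: x + (1 - t) *: y)) <=
  t * Num.sqrt (B x x) + (1 - t) * Num.sqrt (B y y).
Proof.
case/andP=> t0 t1; rewrite quadratic_comb.
have cs := psd_cauchy_schwarz x y.
set p := Num.sqrt (B x x) in cs *; set q := Num.sqrt (B y y) in cs *.
have pp : p ^+ 2 = B x x by rewrite sqr_sqrtr.
have qq : q ^+ 2 = B y y by rewrite sqr_sqrtr.
have p0 : 0 <= p := sqrtr_ge0 _.
have q0 : 0 <= q := sqrtr_ge0 _.
rewrite -(@ger0_norm _ (t * p + (1 - t) * q)); last by nra.
rewrite -sqrtr_sqr ler_sqrt ?sqr_ge0 // -pp -qq.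
have : 0 <= t * (1 - t) by nra.
nra.
Qed.
End QuadraticForm.
End RealLinear.

Lemma closed_le_continuous (R : realType) (T : topologicalType) (g h : T -> R) :
  continuous g -> continuous h -> closed [set x | g x <= h x].
Proof.
move=> gc hc.
rewrite (_ : [set x | _] = (fun x => h x - g x) @^-1` [set r | 0 <= r]).
  apply: preimage_closed; last exact: closed_ge.
  by move=> x _; exact (continuousB (hc x) (gc x)).
by apply/seteqP; split => x /=; rewrite subr_ge0.
Qed.

Lemma closed_eq_continuous (R : realType) (T : topologicalType) (g h : T -> R) :
  continuous g -> continuous h -> closed [set x | g x = h x].
Proof.
move=> gc hc; rewrite (_ : [set x | _] = [set x | g x <= h x] `&` [set x | h x <= g x]).
  by apply: closedI; exact: closed_le_continuous.
apply/seteqP; split => x /=; first by move=> ->.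
by case=> hg gh; apply/eqP; rewrite eq_le hg gh.
Qed.

Section ComplexCoordinates.
Variable R : realType.
Local Open Scope complex_scope.

(* R[i] carries no topology, so the game is transported to 'rV[R]_(n + n):
   real parts first, imaginary parts last. *)
Definition cvec_of n (x : 'rV[R]_(n + n)) : 'cV[R[i]]_n :=
  \col_j (x 0 (lshift n j) +i* x 0 (rshift n j)).

Definition coords n (u : 'cV[R[i]]_n) : 'rV[R]_(n + n) :=
  row_mx (\row_j complex.Re (u j 0)) (\row_j complex.Im (u j 0)).

Lemma coordsK n : cancel (@coords n) (@cvec_of n).
Proof.
move=> u; apply/matrixP => j j0; rewrite mxE row_mxEl row_mxEr !mxE (ord1 j0).
by case: (u j 0).
Qed.

Definition real_linear_mx k p q (phi : 'rV[R]_k -> 'M[R[i]]_(p, q)) :=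
  forall a b x y, phi (a *: x + b *: y) = a%:C *: phi x + b%:C *: phi y.

Lemma cvec_of_linear n : real_linear_mx (@cvec_of n).
Proof. by move=> a b x y; apply/matrixP => j j0; rewrite !mxE /=; congr Complex; ring. Qed.

Lemma conjT_linear k p q (phi : 'rV[R]_k -> 'M[R[i]]_(p, q)) :
  real_linear_mx phi -> real_linear_mx (fun x => conjT (phi x)).
Proof.
move=> phi_lin a b x y; rewrite /conjT phi_lin.
by rewrite map_mxD !map_mxZ /= oppr0 linearD !linearZ.
Qed.

Lemma trmx_linear k p q (phi : 'rV[R]_k -> 'M[R[i]]_(p, q)) :
  real_linear_mx phi -> real_linear_mx (fun x => (phi x)^T).
Proof. by move=> phi_lin a b x y; rewrite phi_lin linearD !linearZ. Qed.

Lemma Re_mul_linear k p q (phi : 'rV[R]_k -> 'M[R[i]]_(p, q))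
    (P : 'M[R[i]]_(1, p)) (Q : 'M[R[i]]_(q, 1)) :
  real_linear_mx phi -> real_linear (fun x => complex.Re ((P *m phi x *m Q) 0 0)).
Proof.
move=> phi_lin a b x y; rewrite phi_lin mulmxDr mulmxDl -!scalemxAr -!scalemxAl.
have ReZ (c : R) z : complex.Re (c%:C * z) = c * complex.Re z.
  by case: z => ? ? /=; ring.
by rewrite !mxE raddfD /= !ReZ.
Qed.

Lemma Re_mulr_linear k p (phi : 'rV[R]_k -> 'cV[R[i]]_p) (P : 'rV[R[i]]_p) :
  real_linear_mx phi -> real_linear (fun x => complex.Re ((P *m phi x) 0 0)).
Proof.
move=> phi_lin a b x y; have := Re_mul_linear P 1%:M phi_lin a b x y.
by rewrite !mulmx1.
Qed.

Lemma Re_mull_linear k p (phi : 'rV[R]_k -> 'rV[R[i]]_p) (Q : 'cV[R[i]]_p) :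
  real_linear_mx phi -> real_linear (fun x => complex.Re ((phi x *m Q) 0 0)).
Proof.
move=> phi_lin a b x y; have := Re_mul_linear 1%:M Q phi_lin a b x y.
by rewrite !mul1mx.
Qed.

Lemma payoff_linearl n m (A : 'M[R[i]]_(n, m)) v :
  real_linear (fun x => payoff A (cvec_of x) v).
Proof.
move=> a b x y; rewrite /payoff -!mulmxA.
exact: Re_mull_linear (conjT_linear (@cvec_of_linear n)) a b x y.
Qed.

Lemma payoff_linearr n m (A : 'M[R[i]]_(n, m)) u :
  real_linear (fun y => payoff A u (cvec_of y)).
Proof. exact: Re_mulr_linear (@cvec_of_linear m). Qed.

Definition var_bilinear n (G J : 'M[R[i]]_n) (x y : 'rV[R]_(n + n)) : R :=
  (complex.Re ((conjT (cvec_of x) *m G *m cvec_of y) 0 0) +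
   complex.Re (((cvec_of x)^T *m J *m cvec_of y) 0 0)) / 2.

Lemma var_bilinear_bilinear n (G J : 'M[R[i]]_n) : real_bilinear (var_bilinear G J).
Proof.
have cvec_lin := @cvec_of_linear n.
split=> [y|x] a b x1 x2; rewrite /var_bilinear.
  rewrite -!mulmxA (Re_mull_linear _ (conjT_linear cvec_lin)).
  rewrite (Re_mull_linear _ (trmx_linear cvec_lin)); lra.
rewrite (Re_mulr_linear _ cvec_lin) (Re_mulr_linear _ cvec_lin); lra.
Qed.

Definition dotr k (x y : 'rV[R]_k) : R := (x *m y^T) 0 0.

Lemma dotr_bilinear k : real_bilinear (@dotr k).
Proof.
rewrite /dotr; split=> [y|x] a b x1 x2.
  by rewrite mulmxDl -!scalemxAl !mxE.
by rewrite linearD !linearZ /= mulmxDr -!scalemxAr !mxE.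
Qed.

Lemma dotr_ge0 k (x : 'rV[R]_k) : 0 <= dotr x x.
Proof. by rewrite /dotr mxE; apply: sumr_ge0 => j _; rewrite mxE -expr2 sqr_ge0. Qed.

Lemma cnorm_coords n (x : 'rV[R]_(n + n)) : cnorm (cvec_of x) = Num.sqrt (dotr x x).
Proof.
rewrite /cnorm /dotr mxE big_split_ord /= -big_split /=.
by congr Num.sqrt; apply: eq_bigr => j _; rewrite !mxE /= !expr2.
Qed.

Lemma sum_cvec_of n (x : 'rV[R]_(n + n)) :
  \sum_j cvec_of x j 0 = (\sum_j x 0 (lshift n j)) +i* (\sum_j x 0 (rshift n j)).
Proof.
apply/eqP; rewrite eq_complex; apply/andP; split; apply/eqP.
  by rewrite raddf_sum; apply: eq_bigr => j _; rewrite mxE.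
by rewrite raddf_sum; apply: eq_bigr => j _; rewrite mxE.
Qed.

Lemma payoff_saddle_point n m (A : 'M[R[i]]_(n, m))
    (X : set 'rV[R]_(n + n)) (Y : set 'rV[R]_(m + m)) :
  compact X -> compact Y -> convex_set X -> convex_set Y -> X !=set0 -> Y !=set0 ->
  exists x y, [/\ X x, Y y & forall x' y', X x' -> Y y' ->
    payoff A (cvec_of x') (cvec_of y) <= payoff A (cvec_of x) (cvec_of y)
    <= payoff A (cvec_of x) (cvec_of y')].
Proof.
move=> cptX cptY cX cY X0 Y0.
apply: (@minimax_saddle_point R _ _ (fun x y => payoff A (cvec_of x) (cvec_of y))) => //.
- by move=> y; apply/real_linear_affine/payoff_linearl.
- by move=> x; apply/real_linear_affine/payoff_linearr.
- move=> y r; exact (closed_le_continuous (@cst_continuous _ _ r)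
    (real_linear_continuous (payoff_linearl A (cvec_of y)))).
- move=> x r; exact (closed_le_continuous
    (real_linear_continuous (payoff_linearr A (cvec_of x))) (@cst_continuous _ _ r)).
Qed.
End ComplexCoordinates.

Section ChanceSet.
Variables (R : realType) (n : nat) (al s k c : R) (mu : 'rV[R[i]]_n) (G J : 'M[R[i]]_n).
Local Open Scope complex_scope.

Definition chance_set : set 'rV[R]_(n + n) :=
  [set x | Uset al (cvec_of x) /\
     s * complex.Re ((mu *m cvec_of x) 0 0) + k * Num.sqrt (var_bilinear G J x x) + c <= 0].

Lemma chance_set_convex : 0 <= k -> (forall u, 0 <= varform G J u) ->
  convex_set chance_set.
Proof.
move=> k0 psd; apply/(@convex_setP _ 'rV[R]_(n + n)).
move=> t x y t01 [[nx [rx sx]] cx] [[ny [ry sy]] cy]; have /andP[t0 t1] := t01.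
have cvecE := @cvec_of_linear R n t (1 - t) x y.
split; [split; [|split]|].
- rewrite cnorm_coords (le_trans (sqrt_psd_convex (@dotr_bilinear _ _) (@dotr_ge0 _ _) _ _ t01)) //.
  rewrite -!cnorm_coords; nra.
- move=> j; have := rx j; have := ry j; rewrite cvecE !mxE /=; nra.
- rewrite cvecE (_ : \sum_j _ = t%:C * \sum_j cvec_of x j 0 + (1 - t)%:C * \sum_j cvec_of y j 0).
    by rewrite sx sy !mulr1 -raddfD /= addrC subrK.
  by rewrite !mulr_sumr -big_split; apply: eq_bigr => j _; rewrite !mxE.
- have := Re_mulr_linear mu (@cvec_of_linear R n) t (1 - t) x y.
  have := sqrt_psd_convex (var_bilinear_bilinear G J) (fun z => psd (cvec_of z)) x y t01.
  rewrite /= => hsq ->; have := ler_wpM2l k0 hsq; nra.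
Qed.

Lemma chance_setE : chance_set =
  [set x | Num.sqrt (dotr x x) <= al] `&`
  \bigcap_(j in setT) [set x | 0 <= x 0 (lshift n j)] `&`
  [set x | \sum_j x 0 (lshift n j) = 1] `&` [set x | \sum_j x 0 (rshift n j) = 0] `&`
  [set x | s * complex.Re ((mu *m cvec_of x) 0 0) + k * Num.sqrt (var_bilinear G J x x) + c <= 0].
Proof.
rewrite /chance_set; apply/seteqP; split => x /=.
  move=> [[nx [rx sx]] cx]; move: sx; rewrite sum_cvec_of => -[sre sim].
  rewrite -cnorm_coords; do ![split] => // j _.
  by have := rx j; rewrite mxE.
move=> [[[[nx rx] sre] sim] cx]; rewrite /Uset /= cnorm_coords sum_cvec_of sre sim.
by do ![split] => // j; rewrite mxE; apply: rx.
Qed.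

Lemma chance_set_closed : closed chance_set.
Proof.
have coord_cont i : continuous (fun x : 'rV[R]_(n + n) => x 0 i).
  exact: coord_continuous.
have sum_cont (f : 'I_n -> 'I_(n + n)) :
    continuous (fun x : 'rV[R]_(n + n) => \sum_j x 0 (f j)).
  by apply: continuous_big => [|j _]; [exact: add_continuous | exact: coord_cont].
have cst_cont (r : R) : continuous (fun _ : 'rV[R]_(n + n) => r).
  exact: cst_continuous.
rewrite chance_setE; apply: closedI; [apply: closedI; [apply: closedI; [apply: closedI|]|]|].
- apply: closed_le_continuous (cst_cont al).
  exact (sqrt_quadratic_continuous (@dotr_bilinear R (n + n))).
- by apply: closed_bigI => j _; apply: closed_le_continuous.
- exact: closed_eq_continuous.
- exact: closed_eq_continuous.
- apply: closed_le_continuous (cst_cont 0) => x.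
  apply: continuousD (cst_cont c x); apply: continuousD; apply: continuousM.
  + exact: cst_cont.
  + exact: (real_linear_continuous (Re_mulr_linear mu (@cvec_of_linear R n))).
  + exact: cst_cont.
  + move: x; exact (sqrt_quadratic_continuous (var_bilinear_bilinear G J)).
Qed.

Lemma chance_set_compact : compact chance_set.
Proof.
have box_compact := @rV_compact _ (n + n) _ (fun=> @segment_compact R (- al) al).
apply: subclosed_compact chance_set_closed box_compact _ => x [[nx _] _] j.
rewrite /= in_itv /= -ler_norml; apply: le_trans nx.
rewrite cnorm_coords -sqrtr_sqr ler_wsqrtr // /dotr mxE (bigD1 j) //= mxE -expr2.
by rewrite lerDl sumr_ge0 // => i _; rewrite mxE -expr2 sqr_ge0.
Qed.
End ChanceSet.

Lemma measurable_lincomb (R : realType) (a b : R) :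
  measurable_fun setT (fun z : R * R => a * z.1 + b * z.2).
Proof.
by apply: measurable_realfun.measurable_funD; apply: measurable_realfun.measurable_funM.
Qed.

Lemma measurable_lincomb_itv (R : realType) (a b : R) (I : interval R) :
  measurable [set z : R * R | a * z.1 + b * z.2 \in I].
Proof. by have := measurable_lincomb a b measurableT (measurable_itv I); rewrite setTI. Qed.

Lemma measurable_fst_itv (R : realType) (I : interval R) :
  measurable [set z : R * R | z.1 \in I].
Proof.
rewrite (_ : [set z | _] = [set z : R * R | 1 * z.1 + 0 * z.2 \in I]).
  exact: measurable_lincomb_itv.
by apply/seteqP; split => z; rewrite /= mul1r mul0r addr0.
Qed.

Lemma rot_atan_fst (R : realType) (q : R) (z : R * R) :
  (Defs.rot (atan q) z).1 = cos (atan q) * (z.1 - q * z.2).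
Proof.
have cos_neq0 : cos (atan q) != 0.
  by apply: lt0r_neq0; apply: cos_gt0_pihalf; rewrite atan_gtNpi2 atan_ltpi2.
have sinE : sin (atan q) = q * cos (atan q).
  by have tanE : sin (atan q) / cos (atan q) = q := atanK q; rewrite -{2}tanE divfK.
by rewrite /Defs.rot /= sinE; ring.
Qed.

Section StandardCES.
Variables (R : realType) (P : probability (R * R)%type R).
Hypothesis P_std : std_CES P.

Let strip (c : R) := [set z : R * R | z.1 \in `](- c), c[%R].

Let strip_angle (k : nat) : R :=
  if choice.unpickle k is Some (Some q) then atan (ratr q : R) else pi / 2.

(* pi / 2 handles the points with z.2 = 0, atan q with q rational close to
   z.1 / z.2 the others. *)
Lemma rotated_strips_cover (c : R) : 0 < c ->
  setT `<=` \bigcup_k Defs.rot (strip_angle k) @^-1` strip c.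
Proof.
move=> c0 z _; have [z2_0|z2_neq0] := eqVneq z.2 0.
  exists (choice.pickle (None : option rat)) => //.
  rewrite /strip_angle choice.pickleK /Defs.rot /= cos_pihalf sin_pihalf z2_0.
  by rewrite /strip /= mul0r mulr0 subr0 in_itv /= oppr_lt0 c0.
have d0 : 0 < c / `|z.2| by rewrite divr_gt0 ?normr_gt0.
have [q] := @rat_in_itvoo R (z.1 / z.2 - c / `|z.2|) (z.1 / z.2 + c / `|z.2|) ltac:(lra).
rewrite in_itv /= => /andP[q_gt q_lt].
have close : `|z.1 - ratr q * z.2| < c.
  rewrite -[z.1](divfK z2_neq0) -mulrBl normrM -ltr_pdivlMr ?normr_gt0 //.
  by rewrite ltr_norml; apply/andP; split; lra.
exists (choice.pickle (Some q)) => //.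
rewrite /strip_angle choice.pickleK /strip /=.
have := rot_atan_fst (ratr q) z; rewrite /Defs.rot /= => ->.
rewrite in_itv /= -ltr_norml.
apply: le_lt_trans close; rewrite normrM ler_piMl ?normr_ge0 //.
by rewrite ler_norml cos_geN1 cos_le1.
Qed.

Lemma std_CES_strip_neq0 (c : R) : 0 < c -> P (strip c) != 0%E.
Proof.
move=> c0; apply/eqP => strip0.
have mrot k : measurable (Defs.rot (strip_angle k) @^-1` strip c).
  rewrite (_ : _ @^-1` _ = [set z | cos (strip_angle k) * z.1 +
      (- sin (strip_angle k)) * z.2 \in `](- c), c[%R]).
    exact: measurable_lincomb_itv.
  by apply/seteqP; split => z; rewrite /= mulNr.
have := measure_sigma_subadditive P mrot measurableT (rotated_strips_cover c0).
have zero k : P (Defs.rot (strip_angle k) @^-1` strip c) = 0%E.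
  by rewrite P_std ?strip0 //; exact: measurable_fst_itv.
rewrite (eq_eseriesr (fun k _ => zero k)) eseries0 // => cover_le0.
suff : (1 <= 0 :> \bar R)%E by rewrite lee_fin ler10.
by apply: le_trans cover_le0; rewrite -(probability_setT P).
Qed.

Lemma std_CES_cdf_lt_half (c : R) : 0 < c -> ces_cdf P (- c) < 2^-1.
Proof.
move=> c0.
pose left := [set z : R * R | z.1 \in `]-oo, - c]%R].
pose right := [set z : R * R | z.1 \in `[c, +oo[%R].
have mleft : measurable left := measurable_fst_itv _.
have mright : measurable right := measurable_fst_itv _.
have mstrip : measurable (strip c) := measurable_fst_itv _.
have sym : P right = P left.
  rewrite -(P_std pi) //; congr (P _); apply/seteqP.
  by split => z; rewrite /left /right /Defs.rot /= cospi sinpi !in_itv /= ?andbT; lra.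
have disj1 : left `&` right = set0.
  by apply/seteqP; split => z // []; rewrite /left /right /= !in_itv /= ?andbT; lra.
have disj2 : (left `|` right) `&` strip c = set0.
  apply/seteqP; split => z // [lr]; rewrite /strip /= in_itv /= => /andP[? ?].
  by case: lr; rewrite /left /right /= !in_itv /= ?andbT => ?; lra.
have cover : (left `|` right) `|` strip c = setT.
  apply/seteqP; split => z // _; rewrite /left /right /strip /= !in_itv /= ?andbT.
  have [|lt1] := lerP z.1 (- c); first by left; left.
  by have [|lt2] := lerP c z.1; [left; right | right; lra].
have total : (P left + P right + P (strip c) = 1)%E.
  rewrite -(measureU P mleft mright disj1).
  rewrite -(measureU P (measurableU _ _ mleft mright) mstrip disj2) cover.
  exact: probability_setT.
have cdfE : ces_cdf P (- c) = fine (P left).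
  by rewrite /ces_cdf; congr (fine (P _)); apply/seteqP; split => z; rewrite /= in_itv.
move: total; rewrite sym -(fineK (fin_num_measure P _ mleft)).
rewrite -(fineK (fin_num_measure P _ mstrip)) -!EFinD => -[total].
have : 0 < fine (P (strip c)).
  rewrite lt_def fine_ge0 ?measure_ge0 // andbT.
  by rewrite fine_eq0 ?fin_num_measure ?std_CES_strip_neq0.
by rewrite cdfE; lra.
Qed.

Lemma ces_quantile_ge0 (p : R) : 2^-1 <= p -> 0 <= ces_quantile P p.
Proof.
move=> p_ge; rewrite /ces_quantile.
have [[x0 px0]|none] := pselect ([set x | p <= ces_cdf P x] !=set0); last first.
  rewrite (_ : [set x | _] = set0) ?inf0 //.
  by apply/seteqP; split => x // px; apply: none; exists x.
apply: lb_le_inf; first by exists x0.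
move=> x /= px; rewrite leNgt; apply/negP => x_lt0.
have := @std_CES_cdf_lt_half (- x); rewrite opprK oppr_gt0 => /(_ x_lt0); lra.
Qed.
End StandardCES.

Lemma k_case_ge0 (R : realType) (p k : R) : k_case p k -> 0 <= k.
Proof.
case=> [P P_std /andP[p_ge _] -> | _ -> | _ -> | z1 z2 _ _ _ ->].
- exact: ces_quantile_ge0.
- exact: sqrtr_ge0.
- exact: sqrtr_ge0.
- by rewrite addr_ge0 ?mulr_ge0 ?sqrtr_ge0.
Qed.

Section Feasibility.
Variables (R : realType) (n : nat) (al : R) (mu : 'rV[R[i]]_n) (G J : 'M[R[i]]_n).

Lemma S1_coordsE (b k : R) x :
  S1 al mu G J b k (cvec_of x) <-> chance_set al 1 k (- b) mu G J x.
Proof. by split=> -[Ux hx]; split => //; lra. Qed.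

Lemma S2_coordsE (d k : R) x :
  S2 al mu G J d k (cvec_of x) <-> chance_set al (-1) k d mu G J x.
Proof. by split=> -[Ux hx]; split => //; lra. Qed.

Lemma S1_strictW (b k : R) u : S1_strict al mu G J b k u -> S1 al mu G J b k u.
Proof.
by case=> nu ru su hu; split; [split; [exact: ltW | split => // j; exact: ltW] | exact: ltW].
Qed.

Lemma S2_strictW (d k : R) v : S2_strict al mu G J d k v -> S2 al mu G J d k v.
Proof.
by case=> nv rv sv hv; split; [split; [exact: ltW | split => // j; exact: ltW] | exact: ltW].
Qed.
End Feasibility.

(* The bounds on alpha1 and alpha2 only make U and V nonempty, which the
   strictly feasible points already guarantee. *)
Theorem theorem10 (R : realType) (n m : nat) (A : 'M[R[i]]_(n, m))
  (alpha1 alpha2 : R) (muB : 'rV[R[i]]_n) (b : R) (muD : 'rV[R[i]]_m) (d : R)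
  (GB JB : 'M[R[i]]_n) (GD JD : 'M[R[i]]_m) (p1 p2 k1 k2 : R) :
  1 / Num.sqrt (n%:R) <= alpha1 ->
  1 / Num.sqrt (m%:R) <= alpha2 ->
  cov_pair GB JB -> cov_pair GD JD ->
  k_case p1 k1 -> k_case p2 k2 ->
  (exists u, S1_strict alpha1 muB GB JB b k1 u) ->
  (exists v, S2_strict alpha2 muD GD JD d k2 v) ->
  exists (us : 'cV[R[i]]_n) (vs : 'cV[R[i]]_m),
    [/\ S1 alpha1 muB GB JB b k1 us, S2 alpha2 muD GD JD d k2 vs &
        forall u v, S1 alpha1 muB GB JB b k1 u -> S2 alpha2 muD GD JD d k2 v ->
          payoff A u vs <= payoff A us vs <= payoff A us v].
Proof.
move=> _ _ [_ [_ psdB]] [_ [_ psdD]] /k_case_ge0 k1_ge0 /k_case_ge0 k2_ge0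
  [u0 /S1_strictW u0S] [v0 /S2_strictW v0S].
have [||||xs [ys [/S1_coordsE xsS /S2_coordsE ysS saddle]]] := payoff_saddle_point A
  (@chance_set_compact R n alpha1 1 k1 (- b) muB GB JB)
  (@chance_set_compact R m alpha2 (-1) k2 d muD GD JD).
- exact: chance_set_convex.
- exact: chance_set_convex.
- by exists (coords u0); apply/S1_coordsE; rewrite coordsK.
- by exists (coords v0); apply/S2_coordsE; rewrite coordsK.
exists (cvec_of xs), (cvec_of ys); split => // u v uS vS.
by have := saddle (coords u) (coords v); rewrite !coordsK; apply;
  [apply/S1_coordsE | apply/S2_coordsE]; rewrite coordsK.
Qed.
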